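(* Let $(M,g)$ be a four-dimensional globally hyperbolic analytic spacetime with metric of signature $(+,-,-,-)$, identified via an isometry-compatible diffeomorphism with $\mathbb{R}\times\Sigma$ so that $g=\beta\,dt^2-g_t$, where $\beta>0$ and each $g_t$ is a Riemannian metric on $\Sigma$. For $\varepsilon>0$ let $$g^\varepsilon \doteq (1-i\varepsilon)\,\beta\,dt^2-g_t,\qquad g^R\doteq \beta\,dt^2+g_t .$$ Then for every geodesically convex region $\Omega\subset M$, every $x\in\Omega$ and every $\xi\in T_x\Omega$, $$\hat C(\varepsilon)\,g^R_x(\xi,\xi)\;\le\;|g^\varepsilon_x(\xi,\xi)|\;\le\;\check C(\varepsilon)\,g^R_x(\xi,\xi),$$ where $$\hat C(\varepsilon)=\Big(\tfrac{1}{\varepsilon}+\sqrt{1+\tfrac{1}{\varepsilon^2}}\Big)^{-1},\qquad \check C(\varepsilon)=\sqrt{1+\varepsilon^2}.$$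
   Context: $g^\varepsilon$ is the analytic continuation of the metric $g$ obtained by multiplying the time-time component by $(1-i\varepsilon)$; $g^R$ is the associated Riemannian metric. For $\xi\in T_x M$ one writes $\xi_0=dt(\xi)$, so $g^\varepsilon_x(\xi,\xi)=(1-i\varepsilon)\beta\xi_0^2-g_t(\xi,\xi)$. *)

From HB Require Import structures.
From mathcomp Require Import all_boot all_order all_algebra.
From mathcomp Require Import complex.
Set Implicit Arguments. Unset Strict Implicit. Unset Printing Implicit Defensive.
Import Order.TTheory GRing.Theory Num.Theory.
Local Open Scope ring_scope.
Local Open Scope complex_scope.

(* Pointwise data of g = beta dt^2 - g_t on M ~ R x Sigma (dim Sigma = 3).
   At a point x, a tangent vector xi in T_x M ~ R x T_p Sigma is written
   (xi0, v) with xi0 = dt(xi) and v : 'rV_3 its spatial part in a chart;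
   g_t at x is given by a symmetric positive definite 3x3 matrix G. *)

Definition quadf (R : pzRingType) (G : 'M[R]_3) (v : 'rV[R]_3) : R :=
  (v *m G *m v^T) 0 0.

Definition posdef (R : realFieldType) (G : 'M[R]_3) : Prop :=
  G^T = G /\ forall v : 'rV[R]_3, v != 0 -> 0 < quadf G v.

Definition gR (R : rcfType) (beta : R) (G : 'M[R]_3) (xi0 : R) (v : 'rV[R]_3) : R :=
  beta * xi0 ^+ 2 + quadf G v.

Definition geps (R : rcfType) (eps beta : R) (G : 'M[R]_3) (xi0 : R)
  (v : 'rV[R]_3) : R[i] :=
  (1 - 'i * eps%:C) * (beta * xi0 ^+ 2)%:C - (quadf G v)%:C.

Definition Chat (R : rcfType) (eps : R) : R :=
  (eps^-1 + Num.sqrt (1 + eps^-2))^-1.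

Definition Ccheck (R : rcfType) (eps : R) : R :=
  Num.sqrt (1 + eps ^+ 2).

From HB Require Import structures.
From mathcomp Require Import all_boot all_order all_algebra.
From mathcomp Require Import complex.
From mathcomp Require Import ring lra.
Import Order.TTheory GRing.Theory Num.Theory.
Local Open Scope ring_scope.
Local Open Scope complex_scope.

(* Write a = beta xi0^2 >= 0 and b = g_t(xi, xi) >= 0, so that g^eps = (a - b) - i eps a and
   g^R = a + b.  The upper bound is |a - b| <= a + b.  For the lower bound, the identity
   (4 + eps^2) ((a - b)^2 + eps^2 a^2) = eps^2 (a + b)^2 + (eps^2 a + 2 (a - b))^2
   gives |g^eps| >= eps / sqrt (4 + eps^2) g^R, and Chat eps = eps / (1 + sqrt (1 + eps^2))
   is below that constant.  The estimate is pointwise. *)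

Lemma quadf_ge0 {R : realFieldType} (G : 'M[R]_3) (v : 'rV[R]_3) :
  posdef G -> 0 <= quadf G v.
Proof.
case=> _ Gpos; have [->|v_neq0] := eqVneq v 0; last exact/ltW/Gpos.
by rewrite /quadf !mul0mx mxE.
Qed.

Lemma geps_ReIm {R : rcfType} (eps beta : R) (G : 'M[R]_3) (xi0 : R) (v : 'rV[R]_3) :
  geps eps beta G xi0 v
  = (beta * xi0 ^+ 2 - quadf G v) +i* (- (eps * (beta * xi0 ^+ 2))).
Proof. by apply/eqP; rewrite eq_complex /=; apply/andP; split; apply/eqP; ring. Qed.

Lemma norm_geps {R : rcfType} (eps beta : R) (G : 'M[R]_3) (xi0 : R) (v : 'rV[R]_3) :
  `|geps eps beta G xi0 v|
  = (Num.sqrt ((beta * xi0 ^+ 2 - quadf G v) ^+ 2 + (eps * (beta * xi0 ^+ 2)) ^+ 2))%:C.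
Proof. by rewrite geps_ReIm normc_def /= sqrrN. Qed.

Section Constants.
Context {R : rcfType} {eps : R}.
Hypothesis eps_gt0 : 0 < eps.

Lemma ChatE : Chat eps = eps / (1 + Num.sqrt (1 + eps ^+ 2)).
Proof.
have eps_neq0 : eps != 0 by rewrite gt_eqF.
rewrite /Chat; have -> : 1 + eps ^- 2 = (1 + eps ^+ 2) * eps^-1 ^+ 2.
  by rewrite exprVn mulrDl mul1r divff ?expf_neq0 // addrC.
rewrite sqrtrM ?addr_ge0 ?sqr_ge0 // sqrtr_sqr ger0_norm ?invr_ge0 ?ltW //.
by rewrite -[X in X + _]mul1r -mulrDl invf_div.
Qed.

Lemma Chat_ge0 : 0 <= Chat eps.
Proof. by rewrite ChatE divr_ge0 ?addr_ge0 ?sqrtr_ge0 // ltW. Qed.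

Lemma Chat_sqr_le : Chat eps ^+ 2 * (4 + eps ^+ 2) <= eps ^+ 2.
Proof.
have t_sqr : Num.sqrt (1 + eps ^+ 2) ^+ 2 = 1 + eps ^+ 2.
  by rewrite sqr_sqrtr // addr_ge0 ?sqr_ge0.
have t_ge0 := sqrtr_ge0 (1 + eps ^+ 2).
move: t_sqr t_ge0; rewrite ChatE; set t := Num.sqrt _ => t_sqr t_ge0.
rewrite expr_div_n mulrAC ler_pdivrMr ?exprn_gt0 //; last by lra.
by rewrite ler_pM2l ?exprn_gt0 //; nra.
Qed.

End Constants.

Lemma sqrD_le_geps_normsq {R : realFieldType} (eps a b : R) :
  eps ^+ 2 * (a + b) ^+ 2 <= (4 + eps ^+ 2) * ((a - b) ^+ 2 + (eps * a) ^+ 2).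
Proof.
have -> : (4 + eps ^+ 2) * ((a - b) ^+ 2 + (eps * a) ^+ 2)
          = eps ^+ 2 * (a + b) ^+ 2 + (eps ^+ 2 * a + 2 * (a - b)) ^+ 2 by ring.
by rewrite lerDl sqr_ge0.
Qed.

Lemma Chat_mulD_le_sqrt {R : rcfType} (eps a b : R) : 0 < eps ->
  Chat eps * (a + b) <= Num.sqrt ((a - b) ^+ 2 + (eps * a) ^+ 2).
Proof.
move=> eps_gt0; have [ab_ge0|ab_lt0] := leP 0 (a + b); last first.
  exact: le_trans (mulr_ge0_le0 (Chat_ge0 eps_gt0) (ltW ab_lt0)) (sqrtr_ge0 _).
rewrite -(ger0_norm (mulr_ge0 (Chat_ge0 eps_gt0) ab_ge0)) -sqrtr_sqr.
rewrite ler_sqrt ?addr_ge0 ?sqr_ge0 // exprMn -(ler_pM2r (_ : 0 < 4 + eps ^+ 2)); last first.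
  by rewrite ltr_pwDl ?sqr_ge0.
rewrite mulrAC [X in _ <= X]mulrC.
apply: le_trans _ (sqrD_le_geps_normsq eps a b).
by rewrite ler_wpM2r ?sqr_ge0 ?Chat_sqr_le.
Qed.

Lemma sqrt_le_Ccheck_mulD {R : rcfType} (eps a b : R) : 0 <= a -> 0 <= b ->
  Num.sqrt ((a - b) ^+ 2 + (eps * a) ^+ 2) <= Ccheck eps * (a + b).
Proof.
move=> a_ge0 b_ge0.
have rhs_ge0 : 0 <= Ccheck eps * (a + b) by rewrite mulr_ge0 ?sqrtr_ge0 ?addr_ge0.
rewrite -(ger0_norm rhs_ge0) -sqrtr_sqr ler_sqrt ?sqr_ge0 //.
rewrite [X in _ <= X]exprMn /Ccheck sqr_sqrtr ?addr_ge0 ?sqr_ge0 // exprMn.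
have sub_le : (a - b) ^+ 2 <= (a + b) ^+ 2 by nra.
have a_le : a ^+ 2 <= (a + b) ^+ 2 by nra.
have := ler_wpM2l (sqr_ge0 eps) a_le; lra.
Qed.

Theorem lemma1 (R : rcfType) (M : Type) (beta : M -> R) (gt : M -> 'M[R]_3)
  (hbeta : forall x, 0 < beta x) (hgt : forall x, posdef (gt x))
  (Omega : M -> Prop) (eps : R) (heps : 0 < eps)
  (x : M) (hx : Omega x) (xi0 : R) (v : 'rV[R]_3) :
  (Chat eps * gR (beta x) (gt x) xi0 v)%:C <= `|geps eps (beta x) (gt x) xi0 v|
  /\ `|geps eps (beta x) (gt x) xi0 v| <= (Ccheck eps * gR (beta x) (gt x) xi0 v)%:C.
Proof.
have a_ge0 : 0 <= beta x * xi0 ^+ 2 by rewrite mulr_ge0 ?sqr_ge0 ?ltW.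
have b_ge0 : 0 <= quadf (gt x) v := quadf_ge0 _ v (hgt x).
rewrite norm_geps !lecR /gR; split.
  exact: Chat_mulD_le_sqrt.
exact: sqrt_le_Ccheck_mulD.
Qed.
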